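(* Define integers $\lambda_r$ for $r\ge 1$ by $\lambda_1=1$ and $\lambda_r = 2\left(3^{\lceil r/2 \rceil}+1\right)\lambda_{\lceil r/2 \rceil}$ for $r \ge 2$. Then for every integer $t\ge 0$, $\lambda_{2^t} = 2^{t-1}\left(3^{2^t}-1\right)$. Consequently, for every $n$ of the form $n=3^{2^t}$ with $t\ge 0$ an integer, $g(n,3) \le \frac{1}{2}\, n\log_3 n$.
   Context: For integers $2\le k\le n$, let $S_n$ denote the set of permutations of $[n]=\{1,\dots,n\}$ (written as sequences), and $S_{n,k}$ the set of all sequences of $k$ distinct elements of $[n]$. A sequence $\kappa\in S_{n,k}$ is a subsequence of a permutation $\pi\in S_n$ if its elements appear in $\pi$ in the same relative order as in $\kappa$. A perfect sequence covering array ${\rm PSCA}(n,k)$ with multiplicity $\lambda$ (a positive integer) is a multiset $X$ of elements of $S_n$ such that every $\kappa\in S_{n,k}$ is a subsequence of exactly $\lambda$ elements of $X$ (counted with multiplicity). $g(n,k)$ denotes the smallest $\lambda$ for which a ${\rm PSCA}(n,k)$ with multiplicity $\lambda$ exists. *)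

From HB Require Import structures.
From mathcomp Require Import all_boot all_order all_algebra all_fingroup.
From mathcomp Require Import perm.
From Stdlib Require Import ClassicalEpsilon.
Set Implicit Arguments. Unset Strict Implicit. Unset Printing Implicit Defensive.

Definition perm_seq (n : nat) (pi : {perm 'I_n}) : seq 'I_n :=
  [seq pi i | i <- enum 'I_n].

Definition subseq_of_perm (n : nat) (kappa : seq 'I_n) (pi : {perm 'I_n}) : bool :=
  subseq kappa (perm_seq pi).

(* X (a multiset of permutations, given as a list) is a PSCA(n,k) with
   multiplicity lam: every sequence of k distinct elements of [n] is a
   subsequence of exactly lam elements of X (counted with multiplicity). *)
Definition is_PSCA (n k lam : nat) (X : seq {perm 'I_n}) : Prop :=
  forall kappa : k.-tuple 'I_n, uniq kappa ->
    seq.count (fun pi => subseq_of_perm (val kappa) pi) X = lam.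

Definition PSCA_mult (n k lam : nat) : Prop :=
  0 < lam /\ exists X : seq {perm 'I_n}, @is_PSCA n k lam X.

Definition PSCA_multb (n k : nat) : pred nat :=
  fun lam => if excluded_middle_informative (PSCA_mult n k lam) then true else false.

(* g(n,k) = the smallest multiplicity of a PSCA(n,k)
   (set to 0 by convention if no PSCA existed; for 2 <= k <= n one always exists). *)
Definition g (n k : nat) : nat :=
  match excluded_middle_informative (exists lam, PSCA_multb n k lam) with
  | left h => ex_minn h
  | right _ => 0
  end.

(* If F is
   a field with q elements, a PSCA(q,3) of multiplicity lam gives a PSCA(q^2,3)
   of multiplicity 2(q+1)lam on the affine plane F^2: for each of the q + 1
   directions and each ranking alpha of the old array, order the parallel lines
   by alpha and the points of each line by alpha and by its reverse.  For three
   distinct points, a direction in which they lie on three distinct lines, or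
   all on one line, contributes 2 lam orderings; one in which exactly two of
   them share a line contributes 3 lam if that pair is consecutive in the
   order, and 0 otherwise.  Since two distinct points span exactly one line,
   the total is 2(q+1)lam.  Starting from the six permutations of [3] and
   iterating over the fields of order 3^(2^t) yields PSCA(3^(2^t),3) of
   multiplicity lam_(2^t) = 2^(t-1)(3^(2^t) - 1), which bounds g. *)

From HB Require Import structures.
From mathcomp Require Import all_boot all_order all_algebra all_fingroup all_field.
From mathcomp Require Import zify ring lra.
From Stdlib Require Import ClassicalEpsilon.
Import Order.TTheory GRing.Theory Num.Theory.
Set Implicit Arguments. Unset Strict Implicit. Unset Printing Implicit Defensive.

Lemma ltn_mulD a b c d m : b < m -> d < m ->
  (a * m + b < c * m + d) = (a < c) || (a == c) && (b < d).
Proof.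
move=> bm dm; case: (ltngtP a c) => [ac|ca|->] /=.
- apply/idP; have: a.+1 * m <= c * m by rewrite leq_mul2r ac orbT.
  nia.
- apply/negbTE; rewrite -leqNgt; have: c.+1 * m <= a * m by rewrite leq_mul2r ca orbT.
  nia.
- by rewrite ltn_add2l.
Qed.

Lemma eqn_mulD a b c d m : b < m -> d < m ->
  (a * m + b == c * m + d) = (a == c) && (b == d).
Proof.
move=> bm dm; have m_gt0 : 0 < m by apply: leq_ltn_trans bm.
apply/eqP/andP => [e|[/eqP-> /eqP->]] //.
have := congr1 (divn^~ m) e; have := congr1 (modn^~ m) e => /=.
by rewrite !modnMDl !modn_small // !divnMDl // !divn_small // !addn0 => -> ->.
Qed.

Lemma subseq_sortedE (T : eqType) (leT : rel T) (s t : seq T) :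
    transitive leT -> irreflexive leT -> sorted leT s -> {subset t <= s} ->
  subseq t s = sorted leT t.
Proof.
move=> leT_tr leT_irr s_sorted ts; apply/idP/idP => [ts_sub|t_sorted].
  exact: (subseq_sorted leT_tr ts_sub s_sorted).
apply/(subseq_uniqP (sorted_uniq leT_tr leT_irr s_sorted)).
apply: (irr_sorted_eq leT_tr leT_irr t_sorted (sorted_filter leT_tr _ s_sorted)) => x.
by rewrite mem_filter; apply/idP/andP => [xt|[]//]; split=> //; exact: ts.
Qed.

Lemma subseq_map_can (T1 T2 : eqType) (f : T1 -> T2) (g : T2 -> T1) s t :
  cancel f g -> subseq (map f s) (map f t) = subseq s t.
Proof.
by move=> fK; apply/idP/idP => [/(map_subseq g)|/(map_subseq f)]; rewrite ?mapK.
Qed.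

Lemma subseq_enum_ord n (s : seq 'I_n) : subseq s (enum 'I_n) = sorted (relpre val ltn) s.
Proof.
apply: subseq_sortedE => [i j k|i||i _]; rewrite /= ?ltnn ?mem_enum //.
  exact: ltn_trans.
by rewrite -sorted_map val_enum_ord iota_ltn_sorted.
Qed.

Lemma subseq_of_permV n (s : {perm 'I_n}) a b c :
  subseq_of_perm [:: a; b; c] s^-1%g = (s a < s b < s c).
Proof.
have -> : [:: a; b; c] = map s^-1%g [:: s a; s b; s c] by rewrite /= !permK.
by rewrite /subseq_of_perm /perm_seq (subseq_map_can _ _ (permKV s)) subseq_enum_ord /= andbT.
Qed.

Section Rankings.
Variable T : finType.
Local Notation n := #|T|.

Definition ranking (r : T -> nat) := injective r /\ forall x, r x < n.

Definition in_order (r : T -> nat) (x y z : T) : bool := r x < r y < r z.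

(* A PSCA(#|T|,3) of multiplicity lam, each permutation given by its position
   function; the index type I carries the multiplicities. *)
Record ranking_psca (I : finType) (X : I -> T -> nat) (lam : nat) := RankingPSCA {
  psca_ranking : forall i, ranking (X i);
  psca_count : forall x y z, uniq [:: x; y; z] -> \sum_i in_order (X i) x y z = lam
}.

Lemma ltn_split3 (r : T -> nat) x y z : injective r -> uniq [:: x; y; z] ->
  (r x < r y) = in_order r x y z + in_order r x z y + in_order r z x y :> nat.
Proof.
move=> r_inj; rewrite /= !inE negb_or -!(inj_eq r_inj) andbT /in_order.
by case/andP=> /andP[? ?] ?; case: ltngtP; case: ltngtP; case: ltngtP => //=; lia.
Qed.

Lemma psca_pair_count (I : finType) (X : I -> T -> nat) lam x y : ranking_psca X lam ->
  2 < n -> x != y -> \sum_i (X i x < X i y) = 3 * lam.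
Proof.
case=> Xrank Xcount n_gt2 xy.
have [z zxy] : exists z, z \notin [:: x; y].
  apply/existsP; rewrite -negb_forall; apply: contraTN n_gt2 => /forallP xyT.
  rewrite -leqNgt; apply: leq_trans (card_size [:: x; y]).
  by apply/subset_leq_card/subsetP => u _; exact: xyT.
move: zxy; rewrite !inE negb_or => /andP[zx zy].
have u_xyz : uniq [:: x; y; z] by rewrite /= !inE !negb_or xy !(eq_sym _ z) zx zy.
have u_xzy : uniq [:: x; z; y] by rewrite /= !inE !negb_or xy eq_sym zx zy.
have u_zxy : uniq [:: z; x; y] by rewrite /= !inE !negb_or xy zx zy.
rewrite (eq_bigr _ (fun i _ => ltn_split3 (Xrank i).1 u_xyz)) !big_split /=.
by rewrite !Xcount //; lia.
Qed.

Definition rev_rank (r : T -> nat) x := n - (r x).+1.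

Lemma rev_rank_ranking r : ranking r -> ranking (rev_rank r).
Proof.
case=> r_inj r_lt; split=> [x y|x]; rewrite /rev_rank; last by have := r_lt x; lia.
by have := r_lt x; have := r_lt y => ? ? ?; apply: r_inj; lia.
Qed.

Lemma ltn_rev_rank r x y : ranking r -> (rev_rank r x < rev_rank r y) = (r y < r x).
Proof. by case=> _ r_lt; rewrite /rev_rank; have := r_lt x; have := r_lt y; lia. Qed.

End Rankings.

Lemma ranking_comp (T U : finType) (r : T -> nat) (f : U -> T) :
  #|U| = #|T| -> injective f -> ranking r -> ranking (r \o f).
Proof. by move=> UT f_inj [r_inj r_lt]; split=> [x y /r_inj/f_inj|x] //=; rewrite UT. Qed.

Lemma ranking_psca_card (T U I : finType) (X : I -> T -> nat) lam :
  #|U| = #|T| -> ranking_psca X lam -> exists Y : I -> U -> nat, ranking_psca Y lam.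
Proof.
move=> UT [Xrank Xcount].
pose f (u : U) : T := enum_val (cast_ord UT (enum_rank u)).
have f_inj : injective f by move=> u v /enum_val_inj/cast_ord_inj/enum_rank_inj.
exists (fun i => X i \o f); split=> [i|x y z uxyz]; first exact: ranking_comp.
by apply: Xcount; rewrite (map_inj_uniq f_inj [:: x; y; z]).
Qed.

Section Lexicographic.
Variable T : finType.
Local Notation n := #|T|.

Definition lex_rank (r s : T -> nat) (p : T * T) : nat := r p.1 * n + s p.2.

Lemma lex_rank_ranking r s : ranking r -> ranking s -> ranking (lex_rank r s).
Proof.
case=> r_inj r_lt [s_inj s_lt]; split=> [[a p] [b q]|[a p]]; rewrite /lex_rank /=.
  by move/eqP; rewrite eqn_mulD // => /andP[/eqP/r_inj-> /eqP/s_inj->].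
rewrite card_prod; apply: leq_trans (_ : (r a).+1 * n <= _).
  by rewrite mulSn addnC ltn_add2r.
by rewrite leq_mul2r r_lt orbT.
Qed.

Lemma ltn_lex_rank r s u v : ranking r -> ranking s ->
  (lex_rank r s u < lex_rank r s v) = (r u.1 < r v.1) || (u.1 == v.1) && (s u.2 < s v.2).
Proof. by case=> r_inj _ [_ s_lt]; rewrite ltn_mulD // (inj_eq r_inj). Qed.

(* The count is 2 lam + lam [u.1 = v.1] + lam [v.1 = w.1] - 2 lam [u.1 = w.1];
   the last term is moved to the left to avoid truncated subtraction. *)
Lemma lex_square_count (I : finType) (X : I -> T -> nat) lam u v w :
    ranking_psca X lam -> 2 < n -> uniq [:: u; v; w] ->
  \sum_i (in_order (lex_rank (X i) (X i)) u v w
           + in_order (lex_rank (X i) (rev_rank (X i))) u v w)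
    + 2 * lam * (u.1 == w.1) = 2 * lam + lam * (u.1 == v.1) + lam * (v.1 == w.1).
Proof.
move=> XP n_gt2; case: (XP) => Xrank Xcount.
case: u v w => [a p] [b q] [c s] /=; rewrite !inE !negb_or !xpair_eqE !negb_and andbT.
move=> /andP[/andP[abpq acps] bcqs].
have summandE i :
    in_order (lex_rank (X i) (X i)) (a, p) (b, q) (c, s)
    + in_order (lex_rank (X i) (rev_rank (X i))) (a, p) (b, q) (c, s)
  = ((X i a < X i b) || (a == b) && (X i p < X i q))
      && ((X i b < X i c) || (b == c) && (X i q < X i s))
    + ((X i a < X i b) || (a == b) && (X i q < X i p))
      && ((X i b < X i c) || (b == c) && (X i s < X i q)).
  have Xi := Xrank i; have Xi' := rev_rank_ranking Xi.
  by rewrite /in_order !ltn_lex_rank // !ltn_rev_rank.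
rewrite (eq_bigr _ (fun i _ => summandE i)).
move: acps; case: (eqVneq a b) abpq => [->|ab] /= pq;
  case: (eqVneq b c) bcqs => [<-|bc] /= qs acps.
- have u_pqs : uniq [:: p; q; s] by rewrite /= !inE !negb_or pq qs acps.
  have u_sqp : uniq [:: s; q; p].
    by rewrite /= !inE !negb_or (eq_sym s q) (eq_sym s p) (eq_sym q p) pq qs acps.
  rewrite (eq_bigr (fun i => in_order (X i) p q s + in_order (X i) s q p)) => [|i _].
    by rewrite big_split /= !Xcount //; lia.
  by rewrite ltnn /in_order /=; congr (_ + _); rewrite andbC.
- rewrite muln0 muln1 addn0.
  rewrite (eq_bigr (fun i => X i b < X i c : nat)) => [|i _].
    by rewrite (psca_pair_count XP n_gt2 bc); lia.
  have [Xinj _] := Xrank i; have : X i p != X i q by rewrite (inj_eq Xinj).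
  by rewrite ltnn /= orbF; case: (ltngtP (X i p) (X i q)); case: (X i b < X i c).
- rewrite (negbTE ab) !muln0 muln1 !addn0.
  rewrite (eq_bigr (fun i => X i a < X i b : nat)) => [|i _].
    by rewrite (psca_pair_count XP n_gt2 ab); lia.
  have [Xinj _] := Xrank i; have : X i q != X i s by rewrite (inj_eq Xinj).
  by rewrite ltnn /= orbF; case: (ltngtP (X i q) (X i s)); case: (X i a < X i b).
- rewrite !muln0 !addn0; case: (eqVneq a c) => [ac|ac] /=.
    rewrite ac muln1 (eq_bigr (fun i => 0)) => [|i _]; first by rewrite big1.
    by case: ltngtP.
  rewrite muln0 addn0 (eq_bigr (fun i => 2 * in_order (X i) a b c)) => [|i _].
    by rewrite -big_distrr /= Xcount //= !inE !negb_or ab bc ac.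
  by rewrite /in_order !orbF; case: (_ && _).
Qed.

End Lexicographic.

Section AffinePlane.
Variable F : finFieldType.
Local Open Scope ring_scope.

(* In direction Some a the lines are y = a x + c, indexed by c and coordinatised
   by x; direction None gives the vertical lines. *)
Definition line_of (d : option F) (p : F * F) : F :=
  if d is Some a then p.2 - a * p.1 else p.1.

Definition coord_on (d : option F) (p : F * F) : F :=
  if d is Some a then p.1 else p.2.

Definition plane_chart d p := (line_of d p, coord_on d p).

Lemma plane_chart_inj d : injective (plane_chart d).
Proof.
case: d => [a|] [x y] [x' y'] [] /=; last by move=> -> ->.
move=> e ex; subst x'; congr pair.
by move/(congr1 (fun z => z + a * x)): e; rewrite !subrK.
Qed.

Definition slope (u v : F * F) : option F :=
  if u.1 == v.1 then None else Some ((u.2 - v.2) / (u.1 - v.1)).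

Lemma line_of_eq u v d : u != v -> (line_of d u == line_of d v) = (d == slope u v).
Proof.
case: u v => [x y] [x' y'] uv; rewrite /slope /=; case: d => [a|] /=; last by case: eqP.
case: (eqVneq x x') uv => [<-|xx'] uv /=.
  apply/negbTE; apply: contra uv => /eqP e; apply/eqP; congr pair.
  by move/(congr1 (fun z => z + a * x)): e; rewrite !subrK.
have dx : x - x' != 0 by rewrite subr_eq0.
rewrite -subr_eq0 (_ : _ - _ = y - y' - a * (x - x')); last by ring.
by rewrite subr_eq0 (inj_eq (@Some_inj _)) -(can2_eq (mulfK dx) (divfK dx)) eq_sym.
Qed.

Lemma sum_line_of_eq u v (c : nat) : u != v ->
  (\sum_(d : option F) c * (line_of d u == line_of d v) = c)%N.
Proof.
move=> uv; rewrite (bigD1 (slope u v)) //= line_of_eq // eqxx muln1 big1 ?addn0 //.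
by move=> d /negbTE; rewrite line_of_eq // => ->; rewrite muln0.
Qed.

Local Close Scope ring_scope.

Definition orient (b : bool) (r : F -> nat) := if b then rev_rank r else r.

Definition plane_family (I : finType) (X : I -> F -> nat) (k : option F * I * bool) :=
  lex_rank (X k.1.2) (orient k.2 (X k.1.2)) \o plane_chart k.1.1.

Lemma plane_psca (I : finType) (X : I -> F -> nat) lam : 2 < #|F| ->
  ranking_psca X lam -> ranking_psca (plane_family X) (2 * #|{: option F}| * lam).
Proof.
move=> F_gt2 XP; have [Xrank _] := XP; split=> [[[d i] b]|x y z uxyz]; rewrite /plane_family /=.
  apply: ranking_comp; [by [] | exact: plane_chart_inj |].
  have Xi := Xrank i; apply: lex_rank_ranking => //; case: b => //; exact: rev_rank_ranking.
pose S d i b : nat := in_order (lex_rank (X i) (orient b (X i))) (plane_chart d x)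
  (plane_chart d y) (plane_chart d z).
rewrite -(pair_bigA _ (fun di => S di.1 di.2)) -(pair_bigA _ (fun d i => \sum_b S d i b)) /=.
have /esym : \sum_d (2 * lam + lam * (line_of d x == line_of d y)
                     + lam * (line_of d y == line_of d z))
    = \sum_d (\sum_i \sum_b S d i b + 2 * lam * (line_of d x == line_of d z)).
  apply: eq_bigr => d _.
  have u_chart : uniq (map (plane_chart d) [:: x; y; z]).
    by rewrite map_inj_uniq //; exact: plane_chart_inj.
  have := lex_square_count XP F_gt2 u_chart; rewrite /plane_chart /= => <-.
  by congr (_ + _); apply: eq_bigr => i _; rewrite big_bool addnC.
move: uxyz; rewrite /= !inE !negb_or andbT => /andP[/andP[xy xz] yz].
rewrite [LHS]big_split [RHS]big_split [in RHS]big_split /= !sum_line_of_eq //.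
rewrite (@sum_nat_const _ predT) (eq_card (B := {: option F})) //; nia.
Qed.

End AffinePlane.

Definition base_rankings (i : 'I_6) (x : 'I_3) : nat :=
  nth 0 (nth [::] [:: [:: 0; 1; 2]; [:: 0; 2; 1]; [:: 1; 0; 2];
                     [:: 1; 2; 0]; [:: 2; 0; 1]; [:: 2; 1; 0]] i) x.

Lemma base_psca : ranking_psca base_rankings 1.
Proof.
split=> [[[|[|[|[|[|[|i]]]]]] Hi] //|]; last first.
  move=> [[|[|[|x]]] Hx] // [[|[|[|y]]] Hy] // [[|[|[|z]]] Hz] //=;
    by rewrite !big_ord_recl big_ord0.
all: split=> [[[|[|[|x]]] Hx] // [[|[|[|y]]] Hy] // e|[[|[|[|x]]] Hx] //];
  rewrite ?card_ord //; apply: val_inj; move: e; rewrite /base_rankings /=; lia.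
Qed.

Definition ord_of_ranking n (r : 'I_n -> nat) (i : 'I_n) : 'I_n := insubd i (r i).

Lemma val_ord_of_ranking n (r : 'I_n -> nat) i : ranking r -> val (ord_of_ranking r i) = r i.
Proof. by case=> _ r_lt; rewrite val_insubd; have := r_lt i; rewrite card_ord => ->. Qed.

Lemma ord_of_ranking_inj n (r : 'I_n -> nat) : ranking r -> injective (ord_of_ranking r).
Proof.
by move=> rr i j /(congr1 val); rewrite !val_ord_of_ranking //; case: rr => + _; apply.
Qed.

Lemma ranking_psca_is_PSCA n (I : finType) (X : I -> 'I_n -> nat) lam :
  ranking_psca X lam -> exists P : seq {perm 'I_n}, is_PSCA 3 lam P.
Proof.
case=> Xrank Xcount; pose s i := perm (ord_of_ranking_inj (Xrank i)).
exists [seq (s i)^-1%g | i <- index_enum I] => -[[|a [|b [|c []]]] //= _] uabc.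
rewrite count_map -sum1_count big_mkcond -(Xcount a b c uabc); apply: eq_bigr => i _.
by rewrite /= subseq_of_permV !permE !val_ord_of_ranking //; case: in_order.
Qed.

Lemma g_le n k lam (P : seq {perm 'I_n}) : 0 < lam -> is_PSCA k lam P -> g n k <= lam.
Proof.
move=> lam_gt0 PP; have lamP : PSCA_multb n k lam.
  by rewrite /PSCA_multb; case: excluded_middle_informative => // -[]; split; last exists P.
rewrite /g; case: excluded_middle_informative => [ex|[]]; last by exists lam.
by case: ex_minnP => m _; apply.
Qed.

Lemma ranking_psca_pow3 (mu : nat -> nat) :
    mu 0 = 1 -> (forall t, mu t.+1 = 2 * (3 ^ 2 ^ t + 1) * mu t) ->
  forall t, exists (I : finType) (X : I -> 'I_(3 ^ 2 ^ t) -> nat), ranking_psca X (mu t).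
Proof.
move=> mu0 muS; elim=> [|t [I [X XP]]].
  by exists 'I_6, base_rankings; rewrite mu0; exact: base_psca.
have [F _ cardF] := pPrimePowerField (p := 3) (k := 2 ^ t) isT (expn_gt0 _ _).
have [Y YP] := ranking_psca_card (U := F) (etrans cardF (esym (card_ord _))) XP.
have F_gt2 : 2 < #|F| by rewrite cardF (leq_exp2l 1) ?expn_gt0.
have card_plane : #|'I_(3 ^ 2 ^ t.+1)| = #|{: F * F}|.
  by rewrite card_ord card_prod cardF expnS mulnC expnM expnS expn1.
have [Z ZP] := ranking_psca_card card_plane (plane_psca F_gt2 YP).
exists (option F * I * bool)%type, Z.
by rewrite muS (_ : 3 ^ 2 ^ t + 1 = #|{: option F}|) // card_option cardF addn1.
Qed.

Lemma pow3_closed_form (mu : nat -> nat) :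
    mu 0 = 1 -> (forall t, mu t.+1 = 2 * (3 ^ 2 ^ t + 1) * mu t) ->
  forall t, 2 * mu t = 2 ^ t * (3 ^ 2 ^ t - 1).
Proof.
move=> mu0 muS; elim=> [|t IH]; first by rewrite mu0.
have pos : 0 < 3 ^ 2 ^ t by rewrite expn_gt0.
have sq : 3 ^ 2 ^ t.+1 = 3 ^ 2 ^ t * 3 ^ 2 ^ t.
  by rewrite expnS mulnC expnM expnS expn1.
rewrite muS sq expnS; move: IH pos; set M := 3 ^ 2 ^ t; set P := 2 ^ t; nia.
Qed.

Lemma pow3_mult_gt0 (mu : nat -> nat) :
    mu 0 = 1 -> (forall t, mu t.+1 = 2 * (3 ^ 2 ^ t + 1) * mu t) -> forall t, 0 < mu t.
Proof. by move=> mu0 muS; elim=> [|t IH]; rewrite ?mu0 // muS !muln_gt0 addn1. Qed.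

Unset Implicit Arguments.
Set Strict Implicit.

Theorem mainTheorem6 (lam : nat -> nat)
  (lam1 : lam 1 = 1)
  (lamS : forall r, 2 <= r -> lam r = 2 * (3 ^ uphalf r + 1) * lam (uphalf r)) :
  (forall t : nat,
     ((lam (2 ^ t)%N)%:R = (2%:R)^-1 * (2 ^ t)%N%:R * ((3 ^ (2 ^ t))%N%:R - 1) :> rat)%R)
  /\
  (forall t n : nat, n = 3 ^ (2 ^ t) ->
     ((g n 3)%:R <= (2%:R)^-1 * n%:R * (trunc_log 3 n)%:R :> rat)%R).
Proof.
have lamS2 t : lam (2 ^ t.+1) = 2 * (3 ^ 2 ^ t + 1) * lam (2 ^ t).
  have half : uphalf (2 ^ t.+1) = 2 ^ t by rewrite expnS mul2n uphalf_double.
  have two_le : 2 <= 2 ^ t.+1 by rewrite expnS leq_pmulr ?expn_gt0.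
  by rewrite lamS // half.
have closed := @pow3_closed_form (fun t => lam (2 ^ t)) lam1 lamS2.
have lamE t :
    ((lam (2 ^ t)%N)%:R = (2%:R)^-1 * (2 ^ t)%N%:R * ((3 ^ (2 ^ t))%N%:R - 1) :> rat)%R.
  have pos : 1 <= 3 ^ 2 ^ t by rewrite expn_gt0.
  move/(congr1 (fun k => k%:R : rat)): (closed t); rewrite !natrM natrB //= => e; lra.
split=> // t _ ->; rewrite trunc_expnK //.
have [I [X XP]] := @ranking_psca_pow3 (fun t => lam (2 ^ t)) lam1 lamS2 t.
have [P PP] := ranking_psca_is_PSCA XP.
have lam_gt0 := @pow3_mult_gt0 (fun t => lam (2 ^ t)) lam1 lamS2 t.
apply: (le_trans (_ : _ <= (lam (2 ^ t)%N)%:R)%R); first by rewrite ler_nat (g_le lam_gt0 PP).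
rewrite lamE; have : (0 <= (2 ^ t)%N%:R :> rat)%R by rewrite ler0n.
move: ((2 ^ t)%N%:R)%R ((3 ^ 2 ^ t)%N%:R)%R => P' M; nra.
Qed.
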